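(* Let $\beta\ge1$. For every $\delta>0$ there exists an instance of $1\mid t_j\mid\sum C_j$ with obligatory tests on which $\beta$-SORT satisfies \[ \frac{\mathit{ALG}}{\mathit{OPT}}\ge\frac{\sqrt{4\beta(\beta^2+\beta-1)+1}+1}{2\beta}-\delta. \]
   Context: Scheduling with obligatory tests: jobs $J=\{1,\dots,n\}$ on a single machine; job $j$ has a known test time $t_j\ge0$ and a processing time $p_j\ge0$ revealed only when its test has been executed. The test must be executed before the processing part (which may start any time later); operations are non-preemptive, one at a time. $C_j$ is the completion time of the processing part of $j$; objective $\sum_jC_j$. $\mathit{OPT}$ is the optimal offline objective value (all tests must also be executed); $\mathit{ALG}$ is the algorithm's value. Algorithm $\beta$-SORT (parameter $\beta>0$): maintain a priority queue of available operations, initially containing the test of every job $j$ with priority $\beta t_j$; repeatedly remove a minimum-priority operation and execute it immediately; after executing the test of $j$, insert the processing part of $j$ with priority $p_j$. *)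

From HB Require Import structures.
From mathcomp Require Import all_boot all_order all_algebra.
From mathcomp Require Import reals.
Set Implicit Arguments. Unset Strict Implicit. Unset Printing Implicit Defensive.
Import Order.TTheory GRing.Theory Num.Theory.
Local Open Scope ring_scope.

(* An operation of an n-job instance: (j, true) = test of job j,
   (j, false) = processing part of job j. *)
Definition op (n : nat) := ('I_n * bool)%type.

Section Sched.
Variables (R : realType) (n : nat) (t p : 'I_n -> R).

Definition dur (o : op n) : R := if o.2 then t o.1 else p o.1.

(* Operations are executed back-to-back from time 0 in the order of s;
   completion time of operation o = total duration of s up to and including o. *)
Definition compl (s : seq (op n)) (o : op n) : R :=
  \sum_(x <- take (index o s).+1 s) dur x.

Definition cost (s : seq (op n)) : R := \sum_(j < n) compl s (j, false).

Definition all_ops (s : seq (op n)) : Prop := uniq s /\ (forall o : op n, o \in s).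

Definition feasible (s : seq (op n)) : Prop :=
  all_ops s /\ forall j : 'I_n, (index (j, true) s < index (j, false) s)%N.

Definition is_OPT (v : R) : Prop :=
  (exists s, feasible s /\ cost s = v) /\ (forall s, feasible s -> v <= cost s).

(* operations in the priority queue after executing the operations in pre:
   all unexecuted tests, and unexecuted processing parts whose test was executed *)
Definition available (pre : seq (op n)) (o : op n) : bool :=
  (o \notin pre) && (o.2 || ((o.1, true) \in pre)).

Definition prio (beta : R) (o : op n) : R := if o.2 then beta * t o.1 else p o.1.

(* s is an execution of beta-SORT (with some tie-breaking): at every step the
   executed operation is in the queue and has minimum priority among those in
   the queue; operations are executed immediately, i.e. back-to-back. *)
Definition betaSORT_run (beta : R) (s : seq (op n)) : Prop :=
  all_ops s /\
  forall pre o post, s = pre ++ o :: post ->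
    available pre o /\ forall o', available pre o' -> prio beta o <= prio beta o'.

End Sched.

From HB Require Import structures.
From mathcomp Require Import all_boot all_order all_algebra.
From mathcomp Require Import reals.
From mathcomp Require Import ring lra zify.
Import Order.TTheory GRing.Theory Num.Theory.
Set Implicit Arguments. Unset Strict Implicit. Unset Printing Implicit Defensive.
Local Open Scope ring_scope.

(* Take m short jobs (test 1 + 2e, processing 0) and k long jobs (test 1, processing
   beta (1 + e)). With e > 0 every long operation has a smaller priority than every short
   test, so beta-SORT runs all long tests, then all long processing parts, then the short
   jobs; twice its cost is at least
     S = 2k^2 + beta k (k + 1) + 2 (1 + beta) m k + m (m + 1).
   Doing every job test-then-process, short jobs first, costs half of
     (1 + 2e) (m (m + 1) + 2km) + (1 + beta + beta e) k (k + 1) ~ m^2 + 2km + (1 + beta) k^2.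
   The ratio r of the claim solves beta r^2 - r = beta^2 + beta - 1, which is exactly the
   condition for the quadratic part of S - r (m^2 + 2km + (1 + beta) k^2) to be the square
   (1 - r) (m - a k)^2. Hence with m = floor (a k), e = 1/k and k large, ALG / OPT is at
   least r - delta. *)

Section Schedules.
Variables (R : realType) (n : nat) (t p : 'I_n -> R).

Definition pair_delay (s : seq (op n)) (j j' : 'I_n) : R :=
  (if (index (j', true) s <= index (j, false) s)%N then t j' else 0)
  + (if (index (j', false) s <= index (j, false) s)%N then p j' else 0).

Lemma compl_allE (s : seq (op n)) (o : op n) : all_ops s ->
  compl t p s o = \sum_(o' : op n) (if (index o' s <= index o s)%N then dur t p o' else 0).
Proof.
case=> us alls; rewrite /compl big_uniq ?take_uniq // big_mkcond.
by apply: eq_bigr => o' _; rewrite in_take // ltnS.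
Qed.

Lemma sum_opE (G : op n -> R) :
  \sum_(o : op n) G o = \sum_(j < n) (G (j, true) + G (j, false)).
Proof.
rewrite [RHS](eq_bigr (fun j => \sum_(b : bool) G (j, b))) => [|j _].
  by rewrite pair_big; apply: eq_bigr => -[].
by rewrite big_bool.
Qed.

Lemma cost_pairE (s : seq (op n)) : all_ops s ->
  cost t p s = \sum_(j < n) \sum_(j' < n) pair_delay s j j'.
Proof. by move=> alls; apply: eq_bigr => j _; rewrite compl_allE // sum_opE. Qed.

Lemma pair_delay_ge0 (s : seq (op n)) (j j' : 'I_n) :
  (forall j, 0 <= t j) -> (forall j, 0 <= p j) -> 0 <= pair_delay s j j'.
Proof. by move=> ht hp; rewrite addr_ge0 //; case: ifP. Qed.

Lemma test_le_cost (s : seq (op n)) (j : 'I_n) : feasible s ->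
  (forall j, 0 <= t j) -> (forall j, 0 <= p j) -> t j <= cost t p s.
Proof.
move=> [alls before] ht hp; rewrite cost_pairE //.
have delay_ge0 j1 j2 := pair_delay_ge0 s j1 j2 ht hp.
rewrite (bigD1 j) //= (bigD1 j) //= -addrA; apply: ler_wpDr.
  by rewrite addr_ge0 // sumr_ge0 // => j1 _; rewrite sumr_ge0.
by rewrite /pair_delay (ltnW (before j)) lerDl; case: ifP.
Qed.

Definition feasibleb (s : seq (op n)) : bool :=
  [&& uniq s, [forall o, o \in s] & [forall j, index (j, true) s < index (j, false) s]%N].

Lemma feasibleP (s : seq (op n)) : reflect (feasible s) (feasibleb s).
Proof.
apply: (iffP and3P) => [[us /forallP alls /forallP before] | [[us alls] before]].
  by split.
by split=> //; apply/forallP.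
Qed.

Lemma feasible_size {s : seq (op n)} : feasible s -> size s == #|{: op n}|.
Proof.
case=> [[us alls] _]; rewrite cardE; apply/eqP/perm_size.
by apply: uniq_perm; rewrite ?enum_uniq // => o; rewrite mem_enum alls.
Qed.

Lemma exists_OPT (s0 : seq (op n)) : feasible s0 ->
  exists s, feasible s /\ is_OPT t p (cost t p s).
Proof.
move=> fs0; pose sched := #|{: op n}|.-tuple (op n).
case: (@arg_minP _ _ _ (Tuple (feasible_size fs0)) (fun s : sched => feasibleb s)
                 (fun s : sched => cost t p s)); first exact/feasibleP.
move=> so /feasibleP fso somin; exists so; split=> //; split; first by exists so.
by move=> s fs; apply: (somin (Tuple (feasible_size fs))); apply/feasibleP.
Qed.

End Schedules.

Section JobOrder.
Variable n : nat.

Definition test_then_proc (L : seq 'I_n) : seq (op n) :=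
  flatten [seq [:: (j, true); (j, false)] | j <- L].

Lemma mem_test_then_proc (L : seq 'I_n) (o : op n) :
  (o \in test_then_proc L) = (o.1 \in L).
Proof.
case: o => j b; elim: L => //= j' L IH.
rewrite !in_cons {}IH /= !xpair_eqE orbA; congr (_ || _).
by case: b; rewrite /= ?andbT ?andbF ?orbF ?orbb.
Qed.

Lemma uniq_test_then_proc (L : seq 'I_n) : uniq L -> uniq (test_then_proc L).
Proof.
elim: L => //= j L IH /andP [jL uL].
by rewrite IH // !in_cons !mem_test_then_proc /= (negbTE jL) xpair_eqE eqxx.
Qed.

Lemma index_test_then_proc (L : seq 'I_n) (j : 'I_n) (b : bool) : j \in L ->
  index (j, b) (test_then_proc L) = (2 * index j L + ~~ b)%N.
Proof.
elim: L => //= j' L IH; rewrite in_cons.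
case: (eqVneq j' j) => [-> _ | neq /= jL].
  by clear IH; case: b; rewrite /= ?eqxx // xpair_eqE eqxx.
rewrite !xpair_eqE (negbTE neq) /= IH //; lia.
Qed.

Definition job_order : seq (op n) := test_then_proc (enum 'I_n).

Lemma index_job_order (j : 'I_n) (b : bool) :
  index (j, b) job_order = (2 * j + ~~ b)%N.
Proof. by rewrite index_test_then_proc ?mem_enum // index_enum_ord. Qed.

Lemma job_order_feasible : feasible job_order.
Proof.
split; last by move=> j; rewrite !index_job_order addn0 addn1.
split; first exact/uniq_test_then_proc/enum_uniq.
by move=> o; rewrite mem_test_then_proc mem_enum.
Qed.

Lemma pair_delay_job_order (R : realType) (t p : 'I_n -> R) (j j' : 'I_n) :
  pair_delay t p job_order j j' = (t j' + p j') *+ (j' <= j)%N.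
Proof.
rewrite /pair_delay !index_job_order /= addn0 !addn1 ltnS leq_mul2l /=.
have -> : (2 * j' <= (2 * j).+1)%N = (j' <= j)%N by apply/idP/idP; lia.
by case: leqP; rewrite ?addr0.
Qed.

End JobOrder.

Section BetaSORT.
Variables (R : realType) (n : nat) (t p : 'I_n -> R) (beta : R) (s : seq (op n)).
Hypothesis run : betaSORT_run t p beta s.

Let alls : all_ops s. Proof. by case: run. Qed.

Lemma available_take (o o' : op n) : available (take (index o s) s) o' =
  (index o s <= index o' s)%N && (o'.2 || (index (o'.1, true) s < index o s)%N).
Proof. by case: alls => _ mem; rewrite /available !in_take ?mem // -leqNgt. Qed.

Lemma betaSORT_step (o : op n) : available (take (index o s) s) o /\
  forall o', available (take (index o s) s) o' -> prio t p beta o <= prio t p beta o'.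
Proof.
case: run => [[_ mem] greedy]; apply: greedy (drop (index o s).+1 s) _.
by rewrite -{1}(cat_take_drop (index o s) s) (drop_nth o) ?nth_index ?index_mem.
Qed.

Lemma betaSORT_test_first (j : 'I_n) : (index (j, true) s < index (j, false) s)%N.
Proof. by have [] := betaSORT_step (j, false); rewrite available_take leqnn. Qed.

Lemma betaSORT_feasible : feasible s.
Proof. by split=> // j; apply: betaSORT_test_first. Qed.

Lemma betaSORT_before (o o' : op n) : prio t p beta o' < prio t p beta o ->
  o'.2 || (index (o'.1, true) s < index o s)%N -> (index o' s < index o s)%N.
Proof.
move=> lt_prio avail; rewrite ltnNge; apply/negP => le_oo'.
have [_ /(_ o')] := betaSORT_step o; rewrite available_take le_oo' avail.
by move=> /(_ isT); rewrite leNgt lt_prio.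
Qed.

End BetaSORT.

Lemma sum_ordered_pairs (R : numDomainType) (c : nat) (f : 'I_c -> nat) :
  injective f ->
  2 * \sum_(i < c) \sum_(i' < c) ((f i' <= f i)%N%:R : R) = c%:R * (c%:R + 1).
Proof.
move=> finj; rewrite mulr2n mulrDl mul1r {2}exchange_big -big_split /=.
have pair i i' : ((f i' <= f i)%N%:R + (f i <= f i')%N%:R : R) = 1 + (i' == i)%:R.
  by rewrite -(inj_eq finj); case: ltngtP; rewrite /= ?addr0 ?add0r.
rewrite (eq_bigr (fun _ => c%:R + 1)) ?sumr_const ?card_ord ?mulr_natl // => i _.
rewrite -big_split (eq_bigr _ (fun i' _ => pair i i')) big_split /= sumr_const card_ord.
by rewrite (bigD1 i) //= eqxx big1 ?addr0 // => i' /negbTE ->.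
Qed.

Lemma sum_ordered_ord_pairs (R : numDomainType) (c : nat) (x : R) :
  2 * \sum_(i < c) \sum_(i' < c) x * (i' <= i)%N%:R = x * (c%:R * (c%:R + 1)).
Proof.
under eq_bigr => i _ do rewrite -mulr_sumr.
by rewrite -mulr_sumr mulrCA (sum_ordered_pairs R (@val_inj _ _ _)).
Qed.

Lemma lshift_ltn (m k : nat) (i : 'I_m) : (lshift k i < m)%N.
Proof. by rewrite /= ltn_ord. Qed.

Lemma rshift_ltnF (m k : nat) (i : 'I_k) : (rshift m i < m)%N = false.
Proof. by rewrite /= ltnNge leq_addr. Qed.

Lemma sumr_const2 (R : numDomainType) (a b : nat) (x : R) :
  \sum_(i < a) \sum_(i' < b) x = x * (a%:R * b%:R).
Proof. by rewrite !sumr_const !card_ord -mulrnA -natrM mulr_natr mulnC. Qed.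

Lemma big_split_ord2 (V : nmodType) (m k : nat) (F : 'I_(m + k) -> 'I_(m + k) -> V) :
  \sum_(j < m + k) \sum_(j' < m + k) F j j' =
    \sum_(i < m) \sum_(i' < m) F (lshift k i) (lshift k i')
  + \sum_(i < m) \sum_(i' < k) F (lshift k i) (rshift m i')
  + \sum_(i < k) \sum_(i' < m) F (rshift m i) (lshift k i')
  + \sum_(i < k) \sum_(i' < k) F (rshift m i) (rshift m i').
Proof.
rewrite big_split_ord /=.
under eq_bigr => i _ do rewrite big_split_ord /=.
under [X in _ + X]eq_bigr => i _ do rewrite big_split_ord /=.
by rewrite !big_split /= addrA.
Qed.

Lemma ler_sum_split_ord2 (R : numDomainType) (m k : nat) (F : 'I_(m + k) -> 'I_(m + k) -> R)
    (A : 'I_m -> 'I_m -> R) (B : 'I_m -> 'I_k -> R) (C : 'I_k -> 'I_m -> R) (D : 'I_k -> 'I_k -> R) :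
  (forall i i', A i i' <= F (lshift k i) (lshift k i')) ->
  (forall i i', B i i' <= F (lshift k i) (rshift m i')) ->
  (forall i i', C i i' <= F (rshift m i) (lshift k i')) ->
  (forall i i', D i i' <= F (rshift m i) (rshift m i')) ->
  \sum_(i < m) \sum_(i' < m) A i i' + \sum_(i < m) \sum_(i' < k) B i i'
  + \sum_(i < k) \sum_(i' < m) C i i' + \sum_(i < k) \sum_(i' < k) D i i'
  <= \sum_(j < m + k) \sum_(j' < m + k) F j j'.
Proof.
move=> leA leB leC leD; rewrite big_split_ord2.
by do !apply: lerD; apply: ler_sum => i _; apply: ler_sum => i' _.
Qed.

Lemma eq_sum_split_ord2 (R : numDomainType) (m k : nat) (F : 'I_(m + k) -> 'I_(m + k) -> R)
    (A : 'I_m -> 'I_m -> R) (B : 'I_m -> 'I_k -> R) (C : 'I_k -> 'I_m -> R) (D : 'I_k -> 'I_k -> R) :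
  (forall i i', F (lshift k i) (lshift k i') = A i i') ->
  (forall i i', F (lshift k i) (rshift m i') = B i i') ->
  (forall i i', F (rshift m i) (lshift k i') = C i i') ->
  (forall i i', F (rshift m i) (rshift m i') = D i i') ->
  \sum_(j < m + k) \sum_(j' < m + k) F j j' =
  \sum_(i < m) \sum_(i' < m) A i i' + \sum_(i < m) \sum_(i' < k) B i i'
  + \sum_(i < k) \sum_(i' < m) C i i' + \sum_(i < k) \sum_(i' < k) D i i'.
Proof.
move=> eqA eqB eqC eqD; rewrite big_split_ord2.
by congr (_ + _ + _ + _); apply: eq_bigr => i _; apply: eq_bigr => i' _.
Qed.

Section Asymptotics.
Variable R : realType.

Definition sort_bound (beta M K : R) : R :=
  2 * K ^+ 2 + beta * (K * (K + 1)) + 2 * (1 + beta) * M * K + M * (M + 1).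

Definition job_order_bound (beta e M K : R) : R :=
  (1 + 2 * e) * (M * (M + 1) + 2 * K * M) + (1 + beta + beta * e) * (K * (K + 1)).

Definition sort_ratio (beta : R) : R :=
  (Num.sqrt (4 * beta * (beta ^+ 2 + beta - 1) + 1) + 1) / (2 * beta).

Lemma sort_ratio_root (beta : R) : 1 <= beta ->
  beta * sort_ratio beta ^+ 2 - sort_ratio beta = beta ^+ 2 + beta - 1.
Proof.
move=> beta_ge1; set r := sort_ratio beta.
have sq : Num.sqrt (4 * beta * (beta ^+ 2 + beta - 1) + 1) = 2 * beta * r - 1.
  by rewrite /r /sort_ratio [2 * beta * _]mulrC divfK ?addrK //; apply/eqP; lra.
have disc_ge0 : 0 <= 4 * beta * (beta ^+ 2 + beta - 1) + 1 by nra.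
have := sqr_sqrtr disc_ge0; rewrite sq => sq2.
apply: (mulfI (_ : 4 * beta != 0)); first by apply/eqP; lra.
by apply/eqP; rewrite -subr_eq0 -(subrr (4 * beta * (beta ^+ 2 + beta - 1) + 1)) -{1}sq2; apply/eqP; ring.
Qed.

Lemma sort_ratio_bounds (beta : R) : 1 <= beta -> 1 < sort_ratio beta <= 1 + beta.
Proof.
move=> beta_ge1; set r := sort_ratio beta.
have root := sort_ratio_root beta_ge1; rewrite -/r in root.
have r_pos : 0 < r by rewrite /r /sort_ratio divr_gt0 ?ltr_wpDl ?sqrtr_ge0 //; lra.
apply/andP; split.
  rewrite ltNge; apply/negP => r_le1.
  have : r * (beta * r - 1) <= r * (beta - 1) by rewrite ler_wpM2l; nra.
  nra.
rewrite leNgt; apply/negP => r_gt.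
have : (1 + beta) * (beta * (1 + beta) - 1) < r * (beta * r - 1).
  by apply: ltr_pM; nra.
nra.
Qed.

Lemma sort_bound_gap (beta r a M K : R) : r != 1 ->
  beta * r ^+ 2 - r = beta ^+ 2 + beta - 1 -> (r - 1) * a = 1 + beta - r ->
  sort_bound beta M K - r * (M ^+ 2 + 2 * K * M + (1 + beta) * K ^+ 2)
    = (1 - r) * (M - a * K) ^+ 2 + beta * K + M.
Proof.
move=> r_neq1 root def_a.
have a2 : (1 - r) * a ^+ 2 = 2 + beta - r * (1 + beta).
  apply: (mulfI (_ : r - 1 != 0)); first by rewrite subr_eq0.
  have -> : (r - 1) * ((1 - r) * a ^+ 2) = - ((r - 1) * a) ^+ 2 by ring.
  rewrite def_a; apply/eqP; rewrite -subr_eq0; apply/eqP.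
  by transitivity ((beta * r ^+ 2 - r) - (beta ^+ 2 + beta - 1)); [ring | rewrite root subrr].
have -> : (1 - r) * (M - a * K) ^+ 2
    = (1 - r) * M ^+ 2 + 2 * ((r - 1) * a) * M * K + ((1 - r) * a ^+ 2) * K ^+ 2 by ring.
by rewrite def_a a2 /sort_bound; ring.
Qed.

Lemma job_order_bound_excess (beta a M K : R) : 0 <= beta -> 0 <= a -> 1 <= K ->
  0 <= M -> M <= a * K ->
  job_order_bound beta K^-1 M K - (M ^+ 2 + 2 * K * M + (1 + beta) * K ^+ 2)
    <= (2 * a ^+ 2 + 7 * a + 3 * beta + 1) * K.
Proof.
move=> beta_ge0 a_ge0 K_ge1 M_ge0 M_le; set e := K^-1.
have eK : e * K = 1 by rewrite mulVf //; apply/eqP; lra.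
have e_ge0 : 0 <= e by rewrite invr_ge0; lra.
have eM_le : e * M <= a.
  by rewrite -[a]mul1r -eK -mulrA [K * a]mulrC ler_wpM2l.
have eMM_le : e * M * M <= a * a * K.
  by rewrite -[a * a * K]mulrA; apply: ler_pM => //; apply: mulr_ge0.
have -> : job_order_bound beta e M K - (M ^+ 2 + 2 * K * M + (1 + beta) * K ^+ 2)
    = 2 * (e * M * M) + 2 * (e * M) + 4 * (e * K) * M + M + (1 + beta) * K
      + beta * (e * K) * K + beta * (e * K) by rewrite /job_order_bound; ring.
rewrite eK; nra.
Qed.

Lemma job_order_bound_ge (beta e M K : R) : 0 <= beta -> 0 <= e -> 0 <= M -> 0 <= K ->
  K ^+ 2 <= job_order_bound beta e M K.
Proof.
move=> beta_ge0 e_ge0 M_ge0 K_ge0; rewrite /job_order_bound.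
have : 0 <= (1 + 2 * e) * (M * (M + 1) + 2 * K * M) by rewrite mulr_ge0 //; nra.
have : K * (K + 1) <= (1 + beta + beta * e) * (K * (K + 1)).
  by rewrite ler_peMl ?mulr_ge0 //; [lra | nra].
nra.
Qed.

Lemma sort_ratio_approx_real (beta delta a M K : R) : 1 <= beta -> 0 < delta ->
  (sort_ratio beta - 1) * a = 1 + beta - sort_ratio beta -> 0 <= a ->
  0 <= M -> M <= a * K -> a * K < M + 1 ->
  sort_ratio beta * (2 * a ^+ 2 + 7 * a + 3 * beta + 1) + sort_ratio beta < K * delta ->
  1 <= K ->
  (sort_ratio beta - delta) * job_order_bound beta K^-1 M K <= sort_bound beta M K.
Proof.
move=> beta_ge1 delta_gt0 def_a a_ge0 M_ge0 M_le M_gt CK K_ge1.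
have /andP [r_gt1 _] := sort_ratio_bounds beta_ge1.
have beta_ge0 : 0 <= beta by lra.
have gap := sort_bound_gap M K (negbT (gt_eqF r_gt1)) (sort_ratio_root beta_ge1) def_a.
set r := sort_ratio beta in def_a CK r_gt1 gap *.
have excess := job_order_bound_excess beta_ge0 a_ge0 K_ge1 M_ge0 M_le.
have O_ge : K ^+ 2 <= job_order_bound beta K^-1 M K.
  by apply: job_order_bound_ge; rewrite ?invr_ge0; lra.
set O := job_order_bound _ _ _ _ in excess O_ge *.
set O0 := M ^+ 2 + 2 * K * M + _ in gap excess.
set D := 2 * a ^+ 2 + 7 * a + 3 * beta + 1 in excess CK.
have D_ge0 : 0 <= D by rewrite /D; nra.
have sq_le1 : (M - a * K) ^+ 2 <= 1 by nra.
have h1 : r * (O - O0) <= r * (D * K) by rewrite ler_wpM2l //; lra.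
have h2 : (1 - r) * 1 <= (1 - r) * (M - a * K) ^+ 2 by rewrite ler_wnM2l //; lra.
have h3 : delta * K ^+ 2 <= delta * O by rewrite ler_wpM2l //; lra.
have h4 : (r * D + r) * K <= K * delta * K by rewrite ler_wpM2r //; lra.
have h5 : r <= r * K by rewrite ler_peMr //; lra.
clear -gap h1 h2 h3 h4 h5 M_ge0 beta_ge0 K_ge1.
nra.
Qed.

Lemma sort_ratio_approx (beta delta : R) : 1 <= beta -> 0 < delta ->
  exists m k : nat, (0 < k)%N /\
    (sort_ratio beta - delta) * job_order_bound beta k%:R^-1 m%:R k%:R
      <= sort_bound beta m%:R k%:R.
Proof.
move=> beta_ge1 delta_gt0; set r := sort_ratio beta.
have /andP [r_gt1 r_le] := sort_ratio_bounds beta_ge1; rewrite -/r in r_gt1 r_le.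
set a := (1 + beta - r) / (r - 1).
have def_a : (r - 1) * a = 1 + beta - r by rewrite mulrC divfK //; apply/eqP; lra.
have a_ge0 : 0 <= a by rewrite divr_ge0 //; lra.
pose k := (Num.truncn ((r * (2 * a ^+ 2 + 7 * a + 3 * beta + 1) + r) / delta)).+1.
pose m := Num.truncn (a * k%:R).
exists m, k; split => //.
apply: (sort_ratio_approx_real beta_ge1 delta_gt0 def_a a_ge0).
- by rewrite ler0n.
- by rewrite truncn_le mulr_ge0.
- by rewrite natr1; exact: truncnS_gt.
- by rewrite -ltr_pdivrMr //; exact: truncnS_gt.
- by rewrite ler1n.
Qed.

End Asymptotics.

Section LowerBoundInstance.
Variables (R : realType) (beta e : R) (m k : nat).

Definition lb_t (j : 'I_(m + k)) : R := if (j < m)%N then 1 + 2 * e else 1.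
Definition lb_p (j : 'I_(m + k)) : R := if (j < m)%N then 0 else beta * (1 + e).

Lemma job_order_lb_cost :
  2 * cost lb_t lb_p (job_order (m + k)) = job_order_bound beta e m%:R k%:R.
Proof.
rewrite cost_pairE; last by case: (job_order_feasible (m + k)).
rewrite (@eq_sum_split_ord2 _ _ _ _
  (fun i i' => (1 + 2 * e) * (i' <= i)%N%:R) (fun _ _ => 0) (fun _ _ => 1 + 2 * e)
  (fun i i' => (1 + beta * (1 + e)) * (i' <= i)%N%:R)) => [|i i'|i i'|i i'|i i'];
  rewrite ?pair_delay_job_order /lb_t /lb_p ?lshift_ltn ?rshift_ltnF ?addr0 ?add0r ?mulr_natr //=.
- rewrite !big1_eq addr0 !mulrDr sumr_const2 !sum_ordered_ord_pairs /job_order_bound; ring.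
- by rewrite leqNgt (ltn_addr _ (ltn_ord i)).
- by rewrite (leq_trans (ltnW (ltn_ord i'))) ?leq_addr.
- by rewrite leq_add2l.
Qed.

Lemma lb_t_ge0 (j : 'I_(m + k)) : 0 <= e -> 0 <= lb_t j.
Proof. by move=> e_ge0; rewrite /lb_t; case: ifP => _; lra. Qed.

Lemma lb_p_ge0 (j : 'I_(m + k)) : 0 <= beta -> 0 <= e -> 0 <= lb_p j.
Proof. by move=> b_ge0 e_ge0; rewrite /lb_p; case: ifP => _; nra. Qed.

Section SortRun.
Variable s : seq (op (m + k)).
Hypothesis run : betaSORT_run lb_t lb_p beta s.

Let f (j : 'I_(m + k)) := index (j, false) s.

Let f_inj : injective f.
Proof.
case: run => [[_ mem] _] j1 j2 /(index_inj (j1, false) (mem _) (mem _)).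
by case.
Qed.

Lemma sort_delay_long_long (j j' : 'I_(m + k)) : 1 <= beta -> 0 < e ->
  (j < m)%N = false -> (j' < m)%N = false ->
  1 + beta * (f j' <= f j)%N%:R <= pair_delay lb_t lb_p s j j'.
Proof.
move=> beta_ge1 e_gt0 jl j'l; rewrite /pair_delay /lb_t /lb_p j'l.
have test_before : (index (j', true) s < index (j, false) s)%N.
  apply: (betaSORT_before run) => //.
  by rewrite /prio /= /lb_t /lb_p jl j'l ltr_pM2l; lra.
rewrite (ltnW test_before) lerD2l /f; case: leqP => _; rewrite ?mulr1 ?mulr0 //.
by rewrite ler_peMr; lra.
Qed.

Lemma sort_delay_short_long (j j' : 'I_(m + k)) : 1 <= beta -> 0 < e ->
  (j < m)%N -> (j' < m)%N = false ->
  1 + beta <= pair_delay lb_t lb_p s j j'.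
Proof.
move=> beta_ge1 e_gt0 js j'l.
have test_before : (index (j', true) s < index (j, true) s)%N.
  apply: (betaSORT_before run) => //.
  by rewrite /prio /= /lb_t js j'l ltr_pM2l; lra.
have proc_before : (index (j', false) s < index (j, true) s)%N.
  apply: (betaSORT_before run) => //.
  by rewrite /prio /= /lb_t /lb_p js j'l ltr_pM2l; lra.
have test_first := betaSORT_test_first run j.
rewrite /pair_delay /lb_t /lb_p j'l (ltnW (ltn_trans test_before test_first)).
rewrite (ltnW (ltn_trans proc_before test_first)).
by rewrite lerD2l ler_peMr; lra.
Qed.

Lemma sort_delay_short_short (j j' : 'I_(m + k)) : 0 <= e -> (j < m)%N -> (j' < m)%N ->
  (f j' <= f j)%N%:R <= pair_delay lb_t lb_p s j j'.
Proof.
move=> e_ge0 js j's; rewrite /pair_delay /lb_t /lb_p j's if_same addr0 /f.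
case: leqP => [le_ff | _] /=; last by case: ifP => _; lra.
by rewrite (ltnW (leq_trans (betaSORT_test_first run j') le_ff)); lra.
Qed.

Lemma betaSORT_lb_cost : 1 <= beta -> 0 < e -> sort_bound beta m%:R k%:R <= 2 * cost lb_t lb_p s.
Proof.
move=> beta_ge1 e_gt0; have alls : all_ops s by case: run.
rewrite cost_pairE //; apply: le_trans (ler_wpM2l _ (@ler_sum_split_ord2 _ _ _ _
  (fun i i' => (f (lshift k i') <= f (lshift k i))%N%:R) (fun _ _ => 1 + beta) (fun _ _ => 0)
  (fun i i' => 1 + beta * (f (rshift m i') <= f (rshift m i))%N%:R) _ _ _ _)) => //.
- rewrite !big1_eq addr0 sumr_const2.
  under [X in _ + X]eq_bigr => i _ do rewrite big_split -mulr_sumr /=.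
  rewrite big_split -mulr_sumr /= sumr_const2.
  have ss := sum_ordered_pairs R (inj_comp f_inj (@lshift_inj m k)).
  have ll := sum_ordered_pairs R (inj_comp f_inj (@rshift_inj m k)).
  rewrite /= in ss ll; set A := \sum_(i < m) _ in ss *; set B := \sum_(i < k) _ in ll *.
  have -> : 2 * (A + (1 + beta) * (m%:R * k%:R) + (1 * (k%:R * k%:R) + beta * B)) =
    2 * A + 2 * (1 + beta) * m%:R * k%:R + 2 * k%:R ^+ 2 + beta * (2 * B) by ring.
  by rewrite ss ll /sort_bound; lra.
- by move=> i i'; apply: sort_delay_short_short; rewrite ?lshift_ltn //; lra.
- by move=> i i'; apply: sort_delay_short_long; rewrite ?lshift_ltn ?rshift_ltnF.
- move=> i i'; apply: pair_delay_ge0 => j; [apply: lb_t_ge0 | apply: lb_p_ge0]; lra.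
- by move=> i i'; apply: sort_delay_long_long; rewrite ?rshift_ltnF.
Qed.

End SortRun.

End LowerBoundInstance.

Arguments lb_t {R} e m k j.
Arguments lb_p {R} beta e m k j.

Theorem mainTheorem13 (R : realType) (beta : R) (hbeta : 1 <= beta) (delta : R)
  (hdelta : 0 < delta) :
  exists (n : nat) (t p : 'I_n -> R) (OPT : R),
    (forall j, 0 <= t j) /\ (forall j, 0 <= p j) /\
    is_OPT t p OPT /\ 0 < OPT /\
    forall s : seq (op n), betaSORT_run t p beta s ->
      (Num.sqrt (4 * beta * (beta ^+ 2 + beta - 1) + 1) + 1) / (2 * beta) - delta
        <= cost t p s / OPT.
Proof.
have [m [k [k_gt0 approx]]] := sort_ratio_approx hbeta hdelta.
set e : R := k%:R^-1 in approx; have e_gt0 : 0 < e by rewrite invr_gt0 ltr0n.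
have t_ge0 j : 0 <= lb_t e m k j by apply: lb_t_ge0; lra.
have p_ge0 j : 0 <= lb_p beta e m k j by apply: lb_p_ge0; lra.
have [so [fso opt]] := exists_OPT (lb_t e m k) (lb_p beta e m k) (job_order_feasible (m + k)).
exists (m + k)%N, (lb_t e m k), (lb_p beta e m k), (cost (lb_t e m k) (lb_p beta e m k) so).
have OPT_gt0 : 0 < cost (lb_t e m k) (lb_p beta e m k) so.
  apply: lt_le_trans (test_le_cost (rshift m (Ordinal k_gt0)) fso t_ge0 p_ge0).
  by rewrite /lb_t rshift_ltnF.
have OPT_le := opt.2 _ (job_order_feasible (m + k)).
do 4 (split => //); move=> s run; rewrite ler_pdivlMr //.
have OPT_le_s := opt.2 _ (betaSORT_feasible run).
have sort_ge := betaSORT_lb_cost run hbeta e_gt0.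
rewrite -(job_order_lb_cost beta e m k) in approx.
rewrite -/(sort_ratio beta).
case: (lerP 0 (sort_ratio beta - delta)) => ratio_sign; last by nra.
have := ler_wpM2l ratio_sign OPT_le; lra.
Qed.
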